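(* Let $d,\tilde d\in\mathbb{R}^m$ with $d,\tilde d>0$ and $\ell,\tilde\ell\in\mathbb{R}^m$ with $f(d,\ell)>0$ and $f(\tilde d,\tilde\ell)>0$. Let $j\in\{1,\dots,m\}$ and suppose $$\frac{1}{f(\tilde d,\tilde\ell)}\tilde d=\alpha\Big(\frac{1}{f(d,\ell)}d+\frac{2}{m-1}\frac{1}{\gamma_j(d,\ell)^2}e_j\Big)$$ for some scalar $\alpha\ge\frac{m^2-1}{m^2}$. If $\big(d_j/f(d,\ell)\big)^{-1/2}\ge\tau(A,u)$, then $\phi(\tilde d,\tilde\ell)\le e^{-\frac{1}{2(m+1)}}\phi(d,\ell)$.
   Context: Standing assumption: $A=[a_1|\cdots|a_m]\in\mathbb{R}^{n\times m}$ has columns of unit Euclidean norm and $\{A\lambda:\lambda\ge0\}=\mathbb{R}^n$ (so $m\ge2$); $u\in\mathbb{R}^m$. $D=\mathrm{diag}(d)$; $r(\ell)=\tfrac12(u+\ell)$, $v(\ell)=\tfrac12(u-\ell)$, $B(d)=ADA^\top$, $y(d,\ell)=B(d)^{-1}ADr(\ell)$, $t(d,\ell)=A^\top y(d,\ell)-r(\ell)$, $f(d,\ell)=v(\ell)^\top Dv(\ell)-t(d,\ell)^\top Dt(d,\ell)$, $\gamma_i(d,\ell)=\sqrt{f(d,\ell)a_i^\top B(d)^{-1}a_i}$. $\tau(A,u):=|z^*|$ with $z^*:=\max_x\min_i(u_i-a_i^\top x)$. Potential: $\phi(d,\ell):=\prod_{i=1}^m\max\Big\{\big(\tfrac{d_i}{f(d,\ell)}\big)^{-1/2},\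 \tfrac{m}{m+1}\tau(A,u)\Big\}$. *)

(* Vectors in R^k are functions nat -> R
   (only indices < k are meaningful); A is given entrywise: A k i is the
   k-th coordinate (k < n) of the column a_i (i < m). Indices are 0-based. *)
From Stdlib Require Import Reals Lra Lia ClassicalEpsilon.
Open Scope R_scope.

Fixpoint rsum (N : nat) (f : nat -> R) : R :=
  match N with O => 0 | S N' => rsum N' f + f N' end.

Fixpoint rprod (N : nat) (f : nat -> R) : R :=
  match N with O => 1 | S N' => rprod N' f * f N' end.

(* min_{i<N} f i  (for N >= 1; rmin_lt N f = min of f 0, ..., f (N-1)) *)
Fixpoint rmin_upto (N : nat) (f : nat -> R) : R :=
  match N with O => f O | S N' => Rmin (rmin_upto N' f) (f N) end.
Definition rmin_lt (N : nat) (f : nat -> R) : R := rmin_upto (N - 1) f.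

(* M^{-1} b for an n x n matrix M: some w with M w = b (on coordinates < n).
   When M is invertible, w is unique on coordinates < n. *)
Definition solve (n : nat) (M : nat -> nat -> R) (b : nat -> R) : nat -> R :=
  epsilon (inhabits (fun _ : nat => 0))
    (fun w => forall k, (k < n)%nat -> rsum n (fun l => M k l * w l) = b k).

Section Defs.
Variables (n m : nat) (A : nat -> nat -> R) (u : nat -> R).

Definition rvec (l : nat -> R) : nat -> R := fun i => (u i + l i) / 2.
Definition vvec (l : nat -> R) : nat -> R := fun i => (u i - l i) / 2.

Definition Bmat (d : nat -> R) : nat -> nat -> R :=
  fun k l => rsum m (fun i => A k i * d i * A l i).

Definition yvec (d l : nat -> R) : nat -> R :=
  solve n (Bmat d) (fun k => rsum m (fun i => A k i * d i * rvec l i)).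

Definition tvec (d l : nat -> R) : nat -> R :=
  fun i => rsum n (fun k => A k i * yvec d l k) - rvec l i.

Definition fval (d l : nat -> R) : R :=
  rsum m (fun i => vvec l i * d i * vvec l i)
  - rsum m (fun i => tvec d l i * d i * tvec d l i).

Definition aBa (d : nat -> R) (i : nat) : R :=
  rsum n (fun k => A k i * solve n (Bmat d) (fun k' => A k' i) k).

Definition gamma (d l : nat -> R) (i : nat) : R := sqrt (fval d l * aBa d i).

Definition inner_min (x : nat -> R) : R :=
  rmin_lt m (fun i => u i - rsum n (fun k => A k i * x k)).

(* z* = max_x min_i (u_i - a_i^T x) (attained under the standing assumption) *)
Definition zstar : R :=
  epsilon (inhabits 0)
    (fun z => (exists x, inner_min x = z) /\ (forall x, inner_min x <= z)).

Definition tau : R := Rabs zstar.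

Definition phi (d l : nat -> R) : R :=
  rprod m (fun i => Rmax (Rpower (d i / fval d l) (- (1/2)))
                         (INR m / (INR m + 1) * tau)).
End Defs.

(* Write s_i = d_i / f(d,l).  The update multiplies every s_i by alpha and in
   addition pushes s_j up by 2/(m-1) / gamma_j^2.  Since B(d) >= d_j a_j a_j^T,
   d_j a_j^T B(d)^{-1} a_j <= 1, so the push is at least 2/(m-1) s_j and s_j
   grows by a factor >= alpha (m+1)/(m-1) >= ((m+1)/m)^2.  Hence the j-th factor
   of phi shrinks by m/(m+1) (the hypothesis on tau makes the max attained by
   its first argument), while every other factor grows by at most
   max(alpha^{-1/2}, 1).  By 1 + x <= exp x, the product of these ratios is at
   most exp(-1/(2(m+1))). *)
From Stdlib Require Import Reals Lra Lia ClassicalEpsilon.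
From mathcomp Require all_boot all_algebra Rstruct.
Open Scope R_scope.

Module SquareSystem.
Import all_boot all_algebra Rstruct GRing.Theory.

Lemma rsum_big (N : nat) (f : nat -> R) : rsum N f = (\sum_(i < N) f i)%R.
Proof.
elim: N => [|N IH] /=; first by rewrite big_ord0.
by rewrite big_ord_recr /= IH.
Qed.

Section Solve.
Variables (n : nat) (M : nat -> nat -> R).

(* Transposed, so that the system [M w = b] reads [w^T *m mx = b^T]. *)
Definition mx : 'M[R]_n := \matrix_(i, j) M j i.

Definition fun_of_row (v : 'rV[R]_n) (k : nat) : R := oapp (v ord0) 0 (insub k).

Lemma fun_of_rowE v (i : 'I_n) : fun_of_row v i = v ord0 i.
Proof. by rewrite /fun_of_row valK. Qed.

Lemma rsum_mul_fun_of_row v (k : 'I_n) :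
  rsum n (fun l => M k l * fun_of_row v l) = (v *m mx)%R ord0 k.
Proof.
rewrite rsum_big !mxE; apply: eq_bigr => i _.
by rewrite mxE fun_of_rowE mulrC.
Qed.

Lemma solve_spec b :
  (forall w, (forall k, lt k n -> rsum n (fun l => M k l * w l) = 0) ->
     forall k, lt k n -> w k = 0) ->
  forall k, lt k n -> rsum n (fun l => M k l * solve n M b l) = b k.
Proof.
move=> M_inj.
suff [w Hw] : exists w, forall k, lt k n -> rsum n (fun l => M k l * w l) = b k.
  exact: (epsilon_spec (inhabits (fun _ : nat => 0))
    (fun w => forall k, lt k n -> rsum n (fun l => M k l * w l) = b k) (ex_intro _ w Hw)).
have mx_unit : (mx \in unitmx)%R.
  rewrite unitmxE unitfE; apply/negP => /det0P [v /negP v_nz v_ker]; apply: v_nz.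
  apply/eqP/matrixP => i0 i; rewrite mxE (ord1 i0) -fun_of_rowE.
  apply: (M_inj _ _ _ (ltP (ltn_ord i))) => k /ltP k_lt.
  by rewrite (rsum_mul_fun_of_row v (Ordinal k_lt)) v_ker mxE.
exists (fun_of_row (\row_(i < n) b i *m invmx mx)%R) => k /ltP k_lt.
by rewrite (rsum_mul_fun_of_row _ (Ordinal k_lt)) -mulmxA mulVmx // mulmx1 mxE.
Qed.

End Solve.
End SquareSystem.

Lemma rsum_ext N f g : (forall i, (i < N)%nat -> f i = g i) -> rsum N f = rsum N g.
Proof.
induction N as [|N IH]; intros Hfg; simpl; [reflexivity|].
rewrite IH by (intros; apply Hfg; lia).
rewrite Hfg by lia; reflexivity.
Qed.

Lemma rsum_const0 N : rsum N (fun _ => 0) = 0.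
Proof. induction N as [|N IH]; simpl; [|rewrite IH]; ring. Qed.

Lemma rsum_plus N f g : rsum N (fun i => f i + g i) = rsum N f + rsum N g.
Proof. induction N as [|N IH]; simpl; [|rewrite IH]; ring. Qed.

Lemma rsum_scal N c f : rsum N (fun i => c * f i) = c * rsum N f.
Proof. induction N as [|N IH]; simpl; [|rewrite IH]; ring. Qed.

Lemma rsum_swap N K (F : nat -> nat -> R) :
  rsum N (fun i => rsum K (fun k => F i k)) = rsum K (fun k => rsum N (fun i => F i k)).
Proof.
induction N as [|N IH]; simpl.
- symmetry; apply rsum_const0.
- rewrite IH, <- rsum_plus; reflexivity.
Qed.

Lemma rsum_nonneg N f : (forall i, (i < N)%nat -> 0 <= f i) -> 0 <= rsum N f.
Proof.
induction N as [|N IH]; intros Hf; simpl; [lra|].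
assert (0 <= rsum N f) by (apply IH; intros; apply Hf; lia).
assert (0 <= f N) by (apply Hf; lia).
lra.
Qed.

Lemma rsum_ge_term N f j :
  (forall i, (i < N)%nat -> 0 <= f i) -> (j < N)%nat -> f j <= rsum N f.
Proof.
induction N as [|N IH]; intros Hf Hj; simpl; [lia|].
assert (0 <= rsum N f) by (apply rsum_nonneg; intros; apply Hf; lia).
assert (0 <= f N) by (apply Hf; lia).
destruct (Nat.eq_dec j N) as [->|Hne]; [lra|].
assert (f j <= rsum N f) by (apply IH; [intros; apply Hf; lia|lia]).
lra.
Qed.

Lemma rsum_eq0_nonneg N f :
  (forall i, (i < N)%nat -> 0 <= f i) -> rsum N f = 0 ->
  forall i, (i < N)%nat -> f i = 0.
Proof.
intros Hf Hsum i Hi.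
pose proof (rsum_ge_term N f i Hf Hi); pose proof (Hf i Hi); lra.
Qed.

Lemma pow2_eq0 x : x ^ 2 = 0 -> x = 0.
Proof.
intros Hx; destruct (Req_dec x 0) as [|Hne]; [assumption|].
now apply pow_nonzero with (n := 2%nat) in Hne.
Qed.

Lemma rprod_nonneg N f : (forall i, (i < N)%nat -> 0 <= f i) -> 0 <= rprod N f.
Proof.
induction N as [|N IH]; intros Hf; simpl; [lra|].
apply Rmult_le_pos; [apply IH; intros|]; apply Hf; lia.
Qed.

Lemma rprod_le N f g :
  (forall i, (i < N)%nat -> 0 <= f i <= g i) -> rprod N f <= rprod N g.
Proof.
induction N as [|N IH]; intros Hfg; simpl; [lra|].
apply Rmult_le_compat; [apply rprod_nonneg; intros| |apply IH; intros|];
  apply Hfg; lia.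
Qed.

Lemma rprod_mult N f g : rprod N (fun i => f i * g i) = rprod N f * rprod N g.
Proof. induction N as [|N IH]; simpl; [|rewrite IH]; ring. Qed.

Lemma rprod_le_mult N f g h :
  (forall i, (i < N)%nat -> 0 <= f i <= h i * g i) ->
  rprod N f <= rprod N h * rprod N g.
Proof. intros Hf; rewrite <- rprod_mult; apply rprod_le, Hf. Qed.

Lemma rprod_ext N f g : (forall i, (i < N)%nat -> f i = g i) -> rprod N f = rprod N g.
Proof.
induction N as [|N IH]; intros Hfg; simpl; [reflexivity|].
rewrite IH by (intros; apply Hfg; lia).
rewrite Hfg by lia; reflexivity.
Qed.

Lemma rprod_const N b : rprod N (fun _ => b) = b ^ N.
Proof. induction N as [|N IH]; simpl; [|rewrite IH]; ring. Qed.

Lemma rprod_update N j a b : (j < N)%nat ->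
  rprod N (fun i => if Nat.eqb i j then a else b) = b ^ (N - 1) * a.
Proof.
induction N as [|N IH]; intros Hj; [lia|]; simpl rprod.
destruct (Nat.eqb_spec N j) as [<-|Hne].
- rewrite (rprod_ext N _ (fun _ => b)), rprod_const.
  + replace (S N - 1)%nat with N by lia; reflexivity.
  + intros i Hi; destruct (Nat.eqb_spec i N); [lia|reflexivity].
- rewrite IH by lia.
  replace (S N - 1)%nat with (S (N - 1)) by lia; simpl; ring.
Qed.

Section Gram.
Variables (n m : nat) (A : nat -> nat -> R) (d : nat -> R).
Hypothesis d_pos : forall i, (i < m)%nat -> 0 < d i.

Definition Atmul (w : nat -> R) (i : nat) : R := rsum n (fun k => A k i * w k).

Lemma Bmat_mul w k :
  rsum n (fun l => Bmat m A d k l * w l) = rsum m (fun i => A k i * d i * Atmul w i).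
Proof.
unfold Bmat, Atmul.
transitivity (rsum n (fun l => rsum m (fun i => A k i * d i * (A l i * w l)))).
- apply rsum_ext; intros l _.
  rewrite Rmult_comm, <- rsum_scal; apply rsum_ext; intros; ring.
- rewrite rsum_swap; apply rsum_ext; intros i _; apply rsum_scal.
Qed.

Lemma Bmat_quad w :
  rsum n (fun k => w k * rsum n (fun l => Bmat m A d k l * w l))
  = rsum m (fun i => d i * Atmul w i ^ 2).
Proof.
transitivity (rsum n (fun k => rsum m (fun i => d i * Atmul w i * (A k i * w k)))).
- apply rsum_ext; intros k _.
  rewrite Bmat_mul, <- rsum_scal; apply rsum_ext; intros; ring.
- rewrite rsum_swap; apply rsum_ext; intros i _.
  rewrite rsum_scal; fold (Atmul w i); ring.
Qed.

Lemma Atmul_eq0 w :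
  rsum m (fun i => d i * Atmul w i ^ 2) = 0 -> forall i, (i < m)%nat -> Atmul w i = 0.
Proof.
intros Hquad i Hi.
assert (Hnn : forall i, (i < m)%nat -> 0 <= d i * Atmul w i ^ 2).
{ intros i' Hi'; pose proof (d_pos i' Hi'); nra. }
apply pow2_eq0.
destruct (Rmult_integral _ _ (rsum_eq0_nonneg m _ Hnn Hquad i Hi)) as [Hd|]; [|assumption].
pose proof (d_pos i Hi); lra.
Qed.

Hypothesis A_span : forall x : nat -> R, exists lam : nat -> R,
  forall k, (k < n)%nat -> rsum m (fun i => A k i * lam i) = x k.

Lemma Bmat_inj w :
  (forall k, (k < n)%nat -> rsum n (fun l => Bmat m A d k l * w l) = 0) ->
  forall k, (k < n)%nat -> w k = 0.
Proof.
intros Hker.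
assert (HAt : forall i, (i < m)%nat -> Atmul w i = 0).
{ apply Atmul_eq0; rewrite <- Bmat_quad, <- (rsum_const0 n).
  apply rsum_ext; intros k Hk; rewrite Hker by exact Hk; ring. }
destruct (A_span w) as [lam Hlam].
(* [|w|^2 = w^T A lam = (A^T w)^T lam = 0] *)
assert (Hnorm : rsum n (fun k => w k ^ 2) = 0).
{ transitivity (rsum n (fun k => rsum m (fun i => A k i * w k * lam i))).
  - apply rsum_ext; intros k Hk.
    replace (w k ^ 2) with (w k * w k) by ring.
    rewrite <- (Hlam k Hk) at 2; rewrite <- rsum_scal; apply rsum_ext; intros; ring.
  - rewrite rsum_swap, <- (rsum_const0 m); apply rsum_ext; intros i Hi.
    transitivity (lam i * Atmul w i).
    + unfold Atmul; rewrite <- rsum_scal; apply rsum_ext; intros; ring.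
    + rewrite HAt by exact Hi; ring. }
intros k Hk.
assert (Hnn : forall k, (k < n)%nat -> 0 <= w k ^ 2) by (intros; nra).
exact (pow2_eq0 _ (rsum_eq0_nonneg n _ Hnn Hnorm k Hk)).
Qed.

Lemma Bmat_solve b k : (k < n)%nat ->
  rsum n (fun l => Bmat m A d k l * solve n (Bmat m A d) b l) = b k.
Proof. apply SquareSystem.solve_spec, Bmat_inj. Qed.

Variables (j : nat).
Hypothesis j_lt : (j < m)%nat.
Hypothesis a_j_neq0 : rsum n (fun k => A k j ^ 2) <> 0.

Lemma aBa_quad :
  aBa n m A d j
  = rsum m (fun i => d i * Atmul (solve n (Bmat m A d) (fun k => A k j)) i ^ 2).
Proof.
rewrite <- Bmat_quad; unfold aBa.
apply rsum_ext; intros k Hk; rewrite Bmat_solve by exact Hk; ring.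
Qed.

Lemma aBa_pos : 0 < aBa n m A d j.
Proof.
assert (Hge : 0 <= aBa n m A d j).
{ rewrite aBa_quad; apply rsum_nonneg; intros i Hi; pose proof (d_pos i Hi); nra. }
destruct Hge as [Hgt|Heq]; [exact Hgt|exfalso; apply a_j_neq0].
rewrite aBa_quad in Heq; symmetry in Heq.
assert (HA : forall k, (k < n)%nat -> A k j = 0).
{ intros k Hk; rewrite <- (Bmat_solve (fun k => A k j) k Hk), Bmat_mul.
  rewrite <- (rsum_const0 m); apply rsum_ext; intros i Hi.
  rewrite (Atmul_eq0 _ Heq i Hi); ring. }
rewrite <- (rsum_const0 n); apply rsum_ext; intros k Hk; rewrite HA by exact Hk; ring.
Qed.

(* [B(d) >= d_j a_j a_j^T] *)
Lemma d_aBa_le1 : d j * aBa n m A d j <= 1.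
Proof.
set (t := aBa n m A d j).
assert (Ht := aBa_pos); fold t in Ht.
assert (Hle : d j * t ^ 2 <= t).
{ unfold t at 2; rewrite aBa_quad.
  apply (rsum_ge_term m (fun i => d i * Atmul (solve n (Bmat m A d) (fun k => A k j)) i ^ 2));
    [intros i Hi; pose proof (d_pos i Hi); nra | exact j_lt]. }
nra.
Qed.

End Gram.

Lemma scaled_d_le_inv_gamma_sqr n m A u d l j :
  (forall i, (i < m)%nat -> 0 < d i) ->
  (forall x : nat -> R, exists lam : nat -> R,
     forall k, (k < n)%nat -> rsum m (fun i => A k i * lam i) = x k) ->
  (j < m)%nat -> rsum n (fun k => A k j ^ 2) <> 0 -> 0 < fval n m A u d l ->
  d j / fval n m A u d l <= / gamma n m A u d l j ^ 2.
Proof.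
intros Hd Hspan Hj Haj Hf.
pose proof (aBa_pos n m A d Hd Hspan j Haj) as Ht.
pose proof (d_aBa_le1 n m A d Hd Hspan j Hj Haj) as Hdt.
unfold gamma; rewrite pow2_sqrt by nra.
set (t := aBa n m A d j) in *; set (F := fval n m A u d l) in *.
replace (d j / F) with (d j * t * / (F * t)) by (field; lra).
rewrite <- (Rmult_1_l (/ (F * t))) at 2.
apply Rmult_le_compat_r; [apply Rlt_le, Rinv_0_lt_compat; nra|exact Hdt].
Qed.

Lemma INR_ge2 m : (2 <= m)%nat -> 2 <= INR m.
Proof. intros Hm; replace 2 with (INR 2) by (simpl; ring); apply le_INR, Hm. Qed.

Lemma sqr_pred_ratio_pos M : 2 <= M -> 0 < (M ^ 2 - 1) / M ^ 2.
Proof. intros HM; apply Rdiv_lt_0_compat; nra. Qed.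

Lemma Rpower_neg_half x : 0 < x -> Rpower x (- (1/2)) = / sqrt x.
Proof.
intros Hx; replace (1/2) with (/2) by field.
rewrite Rpower_Ropp, Rpower_sqrt by exact Hx; reflexivity.
Qed.

Lemma Rpower_neg_half_le x y k : 0 < x -> 0 < y -> 0 < k -> x <= k ^ 2 * y ->
  Rpower y (- (1/2)) <= k * Rpower x (- (1/2)).
Proof.
intros Hx Hy Hk Hxy; rewrite !Rpower_neg_half by assumption.
assert (Hsx : 0 < sqrt x) by (apply sqrt_lt_R0; exact Hx).
assert (Hsy : 0 < sqrt y) by (apply sqrt_lt_R0; exact Hy).
assert (Hs : sqrt x <= k * sqrt y).
{ rewrite <- (sqrt_pow2 k), <- sqrt_mult by nra; apply sqrt_le_1; nra. }
replace (/ sqrt y) with (k * / (k * sqrt y)) by (field; lra).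
apply Rmult_le_compat_l; [lra|]; apply Rinv_le_contravar; nra.
Qed.

Definition phi_factor (c x : R) : R := Rmax (Rpower x (- (1/2))) c.

Lemma phi_factor_nonneg c x : 0 <= c -> 0 <= phi_factor c x.
Proof. intros Hc; eapply Rle_trans; [exact Hc|apply Rmax_r]. Qed.

Lemma phi_factor_le_scale x y k c : 0 < x -> 0 < y -> 0 < k -> x <= k ^ 2 * y ->
  c <= k * phi_factor c x -> phi_factor c y <= k * phi_factor c x.
Proof.
intros Hx Hy Hk Hxy Hc; apply Rmax_lub; [|exact Hc].
apply Rle_trans with (k * Rpower x (- (1/2))); [apply Rpower_neg_half_le; assumption|].
apply Rmult_le_compat_l; [lra|apply Rmax_l].
Qed.

Lemma sqr_inv_sqrt x : 0 < x -> (/ sqrt x) ^ 2 = / x.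
Proof. intros Hx; rewrite pow_inv, pow2_sqrt by lra; reflexivity. Qed.

Lemma Rmax_inv_sqrt_sqr_ge alpha : 0 < alpha -> 1 <= Rmax (/ sqrt alpha) 1 ^ 2 * alpha.
Proof.
intros Ha.
assert (H : (/ sqrt alpha) ^ 2 <= Rmax (/ sqrt alpha) 1 ^ 2).
{ apply pow_incr; split; [|apply Rmax_l].
  left; apply Rinv_0_lt_compat, sqrt_lt_R0, Ha. }
rewrite sqr_inv_sqrt in H by exact Ha.
apply Rmult_le_compat_r with (r := alpha) in H; [|lra].
rewrite Rinv_l in H by lra; exact H.
Qed.

Lemma Rmax_inv_sqrt_sqr_le a alpha : 0 < a -> a <= 1 -> a <= alpha ->
  Rmax (/ sqrt alpha) 1 ^ 2 <= / a.
Proof.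
intros Ha Ha1 Haalpha; unfold Rmax; destruct (Rle_dec (/ sqrt alpha) 1).
- rewrite pow1, <- Rinv_1; apply Rinv_le_contravar; assumption.
- rewrite sqr_inv_sqrt by lra; apply Rinv_le_contravar; assumption.
Qed.

Lemma update_coord_growth M alpha s q : 2 <= M -> (M ^ 2 - 1) / M ^ 2 <= alpha ->
  0 < s -> s <= q -> s <= (M / (M + 1)) ^ 2 * (alpha * (s + 2 / (M - 1) * q)).
Proof.
intros HM Halpha Hs Hsq.
assert (Hgrow : s * ((M + 1) / (M - 1)) <= s + 2 / (M - 1) * q).
{ replace (s * ((M + 1) / (M - 1))) with (s + 2 / (M - 1) * s) by (field; lra).
  apply Rplus_le_compat_l, Rmult_le_compat_l; [apply Rlt_le, Rdiv_lt_0_compat|]; lra. }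
apply Rle_trans with ((M / (M + 1)) ^ 2 * ((M ^ 2 - 1) / M ^ 2 * (s * ((M + 1) / (M - 1))))).
- right; field; lra.
- apply Rmult_le_compat_l; [apply pow2_ge_0|].
  apply Rmult_le_compat; [| |exact Halpha|exact Hgrow].
  + apply Rlt_le, sqr_pred_ratio_pos, HM.
  + apply Rlt_le, Rmult_lt_0_compat, Rdiv_lt_0_compat; lra.
Qed.

Lemma phi_factor_pivot_le M alpha c s q : 2 <= M -> (M ^ 2 - 1) / M ^ 2 <= alpha ->
  0 < s -> s <= q -> c <= M / (M + 1) * Rpower s (- (1/2)) ->
  phi_factor c (alpha * (s + 2 / (M - 1) * q)) <= M / (M + 1) * phi_factor c s.
Proof.
intros HM Halpha Hs Hsq Hc.
assert (0 < alpha) by (eapply Rlt_le_trans; [apply sqr_pred_ratio_pos|]; eassumption).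
assert (0 < 2 / (M - 1)) by (apply Rdiv_lt_0_compat; lra).
assert (0 < s + 2 / (M - 1) * q) by nra.
apply phi_factor_le_scale; [exact Hs|apply Rmult_lt_0_compat; assumption|apply Rdiv_lt_0_compat; lra| |].
- apply update_coord_growth; assumption.
- eapply Rle_trans; [exact Hc|].
  apply Rmult_le_compat_l; [apply Rlt_le, Rdiv_lt_0_compat; lra|apply Rmax_l].
Qed.

Lemma phi_factor_scale_le alpha c s : 0 < alpha -> 0 < s -> 0 <= c ->
  phi_factor c (alpha * s) <= Rmax (/ sqrt alpha) 1 * phi_factor c s.
Proof.
intros Halpha Hs Hc.
assert (Hbeta1 : 1 <= Rmax (/ sqrt alpha) 1) by apply Rmax_r.
assert (Hcs : c <= phi_factor c s) by apply Rmax_r.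
apply phi_factor_le_scale; [exact Hs|nra|lra| |nra].
pose proof (Rmax_inv_sqrt_sqr_ge alpha Halpha); nra.
Qed.

Lemma exp_pow x N : exp x ^ N = exp (INR N * x).
Proof.
induction N as [|N IH]; simpl pow.
- rewrite Rmult_0_l, exp_0; reflexivity.
- rewrite IH, S_INR, <- exp_plus; f_equal; ring.
Qed.

Lemma contraction_factor (m : nat) alpha : (2 <= m)%nat ->
  (INR m ^ 2 - 1) / INR m ^ 2 <= alpha ->
  Rmax (/ sqrt alpha) 1 ^ (m - 1) * (INR m / (INR m + 1))
  <= exp (- (1 / (2 * (INR m + 1)))).
Proof.
intros Hm Halpha.
set (M := INR m) in *; set (beta := Rmax (/ sqrt alpha) 1).
assert (Hbeta1 : 1 <= beta) by apply Rmax_r.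
assert (HM : 2 <= M) by (apply INR_ge2, Hm).
assert (Hbeta2 : beta ^ 2 <= exp (1 / (M ^ 2 - 1))).
{ apply Rle_trans with (/ ((M ^ 2 - 1) / M ^ 2)).
  - assert (Ha0 : (M ^ 2 - 1) / M ^ 2 = 1 - / M ^ 2) by (field; nra).
    assert (0 < / M ^ 2) by (apply Rinv_0_lt_compat; nra).
    apply Rmax_inv_sqrt_sqr_le; [apply sqr_pred_ratio_pos, HM|rewrite Ha0; lra|exact Halpha].
  - replace (/ ((M ^ 2 - 1) / M ^ 2)) with (1 + 1 / (M ^ 2 - 1)) by (field; nra).
    apply exp_ineq1_le. }
assert (Hbeta : beta ^ (2 * (m - 1)) <= exp (1 / (M + 1))).
{ rewrite pow_mult.
  apply Rle_trans with (exp (1 / (M ^ 2 - 1)) ^ (m - 1)).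
  - apply pow_incr; split; [apply pow_le; lra|exact Hbeta2].
  - rewrite exp_pow, minus_INR by lia; fold M; right; f_equal; simpl; field; nra. }
assert (Hkappa0 : 0 < M / (M + 1)) by (apply Rdiv_lt_0_compat; lra).
assert (Hkappa : M / (M + 1) <= exp (- (1 / (M + 1)))).
{ eapply Rle_trans; [|apply exp_ineq1_le]; right; field; lra. }
assert (Hsqr : (beta ^ (m - 1) * (M / (M + 1))) ^ 2
               <= exp (- (1 / (2 * (M + 1)))) ^ 2).
{ replace ((beta ^ (m - 1) * (M / (M + 1))) ^ 2)
    with (beta ^ (2 * (m - 1)) * (M / (M + 1)) ^ 2)
    by (rewrite Rpow_mult_distr, <- pow_mult, Nat.mul_comm; reflexivity).
  replace (exp (- (1 / (2 * (M + 1)))) ^ 2)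
    with (exp (1 / (M + 1)) * exp (- (1 / (M + 1))) ^ 2)
    by (rewrite !exp_pow, <- exp_plus; f_equal; simpl; field; lra).
  apply Rmult_le_compat; [apply pow_le; lra| |exact Hbeta|].
  - apply pow_le; lra.
  - apply pow_incr; lra. }
assert (0 <= beta ^ (m - 1) * (M / (M + 1))).
{ apply Rmult_le_pos; [apply pow_le|]; lra. }
pose proof (exp_pos (- (1 / (2 * (M + 1))))).
destruct (Rle_lt_dec (beta ^ (m - 1) * (M / (M + 1))) (exp (- (1 / (2 * (M + 1))))));
  [assumption|nra].
Qed.

Theorem lemma9 (n m : nat) (A : nat -> nat -> R) (u : nat -> R)
  (Hn : (1 <= n)%nat) (Hm : (2 <= m)%nat)
  (Hunit : forall i, (i < m)%nat -> rsum n (fun k => A k i ^ 2) = 1)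
  (Hcone : forall x : nat -> R, exists lam : nat -> R,
      (forall i, (i < m)%nat -> 0 <= lam i) /\
      (forall k, (k < n)%nat -> rsum m (fun i => A k i * lam i) = x k))
  (d dt l lt : nat -> R)
  (Hd : forall i, (i < m)%nat -> 0 < d i)
  (Hdt : forall i, (i < m)%nat -> 0 < dt i)
  (Hf : 0 < fval n m A u d l) (Hft : 0 < fval n m A u dt lt)
  (j : nat) (Hj : (j < m)%nat) (alpha : R)
  (Halpha : (INR m ^ 2 - 1) / INR m ^ 2 <= alpha)
  (Hupd : forall i, (i < m)%nat ->
      / fval n m A u dt lt * dt i =
      alpha * (/ fval n m A u d l * d i
               + (if Nat.eqb i j
                  then 2 / (INR m - 1) * / (gamma n m A u d l j ^ 2)
                  else 0)))
  (Htau : tau n m A u <= Rpower (d j / fval n m A u d l) (- (1/2))) :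
  phi n m A u dt lt <= exp (- (1 / (2 * (INR m + 1)))) * phi n m A u d l.
Proof.
change (rprod m (fun i => phi_factor (INR m / (INR m + 1) * tau n m A u) (dt i / fval n m A u dt lt))
        <= exp (- (1 / (2 * (INR m + 1))))
           * rprod m (fun i => phi_factor (INR m / (INR m + 1) * tau n m A u) (d i / fval n m A u d l))).
set (F := fval n m A u d l) in *; set (Ft := fval n m A u dt lt) in *.
set (M := INR m) in *; set (c := M / (M + 1) * tau n m A u).
assert (HM : 2 <= M) by (apply INR_ge2, Hm).
assert (Hc : 0 <= c).
{ apply Rmult_le_pos; [apply Rlt_le, Rdiv_lt_0_compat; lra|apply Rabs_pos]. }
assert (Halpha0 : 0 < alpha) by (eapply Rlt_le_trans; [apply sqr_pred_ratio_pos|]; eassumption).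
assert (Hspan : forall x, exists lam, forall k, (k < n)%nat -> rsum m (fun i => A k i * lam i) = x k).
{ intros x; destruct (Hcone x) as [lam [_ Hlam]]; exists lam; exact Hlam. }
assert (Hcoord : forall i, (i < m)%nat -> dt i / Ft = alpha * (d i / F
          + if Nat.eqb i j then 2 / (M - 1) * / gamma n m A u d l j ^ 2 else 0)).
{ intros i Hi; unfold Rdiv at 1 2; rewrite Rmult_comm, Hupd, (Rmult_comm (d i)) by exact Hi.
  reflexivity. }
apply Rle_trans with (rprod m (fun i => if Nat.eqb i j then M / (M + 1) else Rmax (/ sqrt alpha) 1)
                      * rprod m (fun i => phi_factor c (d i / F))).
- apply rprod_le_mult; intros i Hi; split; [apply phi_factor_nonneg, Hc|].
  assert (Hs : 0 < d i / F) by (apply Rdiv_lt_0_compat; auto).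
  rewrite Hcoord by exact Hi; destruct (Nat.eqb_spec i j) as [->|Hij].
  + apply phi_factor_pivot_le; [exact HM|exact Halpha|exact Hs| |].
    * apply scaled_d_le_inv_gamma_sqr; auto; rewrite Hunit by exact Hj; lra.
    * apply Rmult_le_compat_l; [apply Rlt_le, Rdiv_lt_0_compat; lra|exact Htau].
  + rewrite Rplus_0_r; apply phi_factor_scale_le; assumption.
- rewrite rprod_update by exact Hj.
  apply Rmult_le_compat_r; [|apply contraction_factor; assumption].
  apply rprod_nonneg; intros i _; apply phi_factor_nonneg, Hc.
Qed.
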